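(* Let $S$ be a unital ring and let $n\geq2$. Then $\xi(M_n(S))\leq 2$; that is, for every $a\in M_n(S)$ there exist $b_1,c_1,d_1,e_1,b_2,c_2,d_2,e_2\in M_n(S)$ such that \[ a=[b_1,c_1][d_1,e_1]+[b_2,c_2][d_2,e_2]. \]
   Context: $M_n(S)$ is the ring of $n\times n$ matrices over $S$, and $[x,y]=xy-yx$. For a unital ring $R$ generated by its commutators, $\xi(R)$ is the minimal $N\in\mathbb{N}$ such that every element of $R$ is a sum of $N$ elements of the form $[b,c][d,e]$ with $b,c,d,e\in R$. *)

From mathcomp Require Import all_boot all_algebra.
Set Implicit Arguments. Unset Strict Implicit. Unset Printing Implicit Defensive.
Import GRing.Theory.
Local Open Scope ring_scope.

Definition mxcomm (S : pzRingType) (n : nat) (x y : 'M[S]_n) : 'M[S]_n :=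
  x *m y - y *m x.

From mathcomp Require Import all_boot all_algebra zify.
Set Implicit Arguments. Unset Strict Implicit. Unset Printing Implicit Defensive.
Import GRing.Theory.
Local Open Scope ring_scope.

(* Let N and T be the upper and lower shift matrices of size n, so that
   N T = 1 - E_(n-1,n-1), T N = 1 - E_00 and both are nilpotent.  If z w = 1 - f
   in a ring with z nilpotent, then x = sum_k w^(k+1) t z^k telescopes to
   [z, x] = t - f y, so u [z, x] = u t whenever u f = 0.  With u = T, z = N and
   t = N a this gives T [N, x1] = (1 - E_00) a; with u = E_01, z = T and
   t = E_10 a it gives E_01 [T, x2] = E_00 a.  Finally T = [D, T] for
   D = diag(0, 1, ..., n-1) and E_01 = [E_00, E_01], so
   a = [D, T] [N, x1] + [E_00, E_01] [T, x2]. *)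

Lemma lannih_commr_nilpotent_onto (R : pzRingType) (z w f u t : R) (m : nat) :
  z * w = 1 - f -> z ^+ m = 0 -> u * f = 0 ->
  exists x, u * (z * x - x * z) = u * t.
Proof.
move=> zw zm uf; pose g k := w ^+ k * t * z ^+ k.
set x := \sum_(0 <= k < m) w ^+ k.+1 * t * z ^+ k; exists x.
suff -> : z * x - x * z = t - f * \sum_(0 <= k < m) g k.
  by rewrite mulrBr mulrA uf mul0r subr0.
have step k : z * (w ^+ k.+1 * t * z ^+ k) - w ^+ k.+1 * t * z ^+ k * z
              = - (g k.+1 - g k) - f * g k.
  have zwk : z * w ^+ k.+1 = (1 - f) * w ^+ k by rewrite exprS mulrA zw.
  rewrite !mulrA zwk -!mulrA -exprSr !mulrA mulrBl mul1r.
  by rewrite /g !mulrBl opprB addrAC.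
have telescope : \sum_(0 <= k < m) (g k.+1 - g k) = - t.
  by rewrite telescope_sumr // /g zm !mulr0 expr0 mulr1 mul1r sub0r.
rewrite /x mulr_sumr mulr_suml -sumrB (eq_bigr _ (fun k _ => step k)).
by rewrite sumrB sumrN telescope opprK mulr_sumr.
Qed.

Lemma graded_mx_nilpotent (S : pzRingType) n m (h : 'I_n -> nat) (A : 'M[S]_n) :
  (forall i, h i < m)%N -> (forall i j, (h j <= h i)%N -> A i j = 0) -> A ^+ m = 0.
Proof.
move=> hm hA.
suff pow0 k i j : (h j < h i + k)%N -> (A ^+ k) i j = 0.
  by apply/matrixP => i j; rewrite mxE pow0 // ltn_addl.
elim: k i j => [|k IH] i j hij.
  by rewrite expr0 mxE; case: eqP hij => // ->; rewrite addn0 ltnn.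
rewrite exprSr -mulmxE mxE big1 // => l _.
case: (ltnP (h l) (h i + k)) => hl; first by rewrite IH ?mul0r.
by rewrite hA ?mulr0 //; lia.
Qed.

Lemma mul_sum_delta_mx (S : pzRingType) p m q (I : finType)
    (f : I -> 'I_p) (g : I -> 'I_m) (h : I -> 'I_q) : injective g ->
  (\sum_i delta_mx (f i) (g i) : 'M[S]_(p, m)) *m (\sum_i delta_mx (g i) (h i))
  = \sum_i delta_mx (f i) (h i).
Proof.
move=> g_inj; rewrite mulmx_suml; apply: eq_bigr => i _.
rewrite mulmx_sumr (bigD1 i) //= mul_delta_mx big1 ?addr0 // => j ji.
by rewrite mul_delta_mx_0 // (inj_eq g_inj) eq_sym.
Qed.

Lemma sum_delta_mx_nilpotent (S : pzRingType) m k (I : finType)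
    (f g : I -> 'I_m) (h : 'I_m -> nat) :
  (forall a, h a < k)%N -> (forall i, h (f i) < h (g i))%N ->
  (\sum_i delta_mx (f i) (g i) : 'M[S]_m) ^+ k = 0.
Proof.
move=> hk hfg; apply: (graded_mx_nilpotent hk) => a b hba.
rewrite summxE big1 // => i _; rewrite mxE.
case: (eqVneq a (f i)) => [ai|]; case: (eqVneq b (g i)) => [bi|] //=.
by move: hba; rewrite ai bi leqNgt hfg.
Qed.

Lemma diag_mx_delta_comm (S : pzRingType) m (d : 'rV[S]_m) i j :
  diag_mx d *m delta_mx i j - delta_mx i j *m diag_mx d
  = (d 0 i - d 0 j) *: delta_mx i j.
Proof.
apply/matrixP => a b; rewrite mul_diag_mx mul_mx_diag !mxE.
case: (eqVneq a i) => [->|]; case: (eqVneq b j) => [->|] //=;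
  by rewrite ?mulr1 ?mul1r ?mulr0 ?mul0r ?subrr.
Qed.

Section ShiftMatrices.

Variables (S : pzRingType) (n : nat).

Definition upshift_mx : 'M[S]_n.+1 :=
  \sum_(i < n) delta_mx (widen_ord (leqnSn n) i) (lift ord0 i).

Definition downshift_mx : 'M[S]_n.+1 :=
  \sum_(i < n) delta_mx (lift ord0 i) (widen_ord (leqnSn n) i).

Definition index_diag_mx : 'M[S]_n.+1 := diag_mx (\row_(k < n.+1) k%:R).

Lemma upshift_downshift : upshift_mx * downshift_mx = 1 - delta_mx ord_max ord_max.
Proof.
rewrite -mulmxE mul_sum_delta_mx; last exact: lift_inj.
by rewrite -idmxE mx1_sum_delta big_ord_recr /= addrK.
Qed.

Lemma downshift_upshift : downshift_mx * upshift_mx = 1 - delta_mx ord0 ord0.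
Proof.
rewrite -mulmxE mul_sum_delta_mx; last by move=> i j /(congr1 val) /= /val_inj.
by rewrite -idmxE mx1_sum_delta big_ord_recl addrC addKr.
Qed.

Lemma downshift_delta_max : downshift_mx * delta_mx ord_max ord_max = 0.
Proof.
rewrite -mulmxE mulmx_suml big1 // => i _.
by rewrite mul_delta_mx_0 // -val_eqE /= neq_ltn ltn_ord.
Qed.

Lemma upshift_nilpotent : upshift_mx ^+ n.+1 = 0.
Proof. by apply: (sum_delta_mx_nilpotent _ (h := val)) => [a|i] /=. Qed.

Lemma downshift_nilpotent : downshift_mx ^+ n.+1 = 0.
Proof.
apply: (sum_delta_mx_nilpotent _ (h := fun a => n - a)%N) => [a|i] /=.
  by rewrite ltnS leq_subr.
by rewrite /bump leq0n add1n; have := ltn_ord i; lia.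
Qed.

Lemma index_diag_downshift_comm :
  index_diag_mx * downshift_mx - downshift_mx * index_diag_mx = downshift_mx.
Proof.
rewrite -mulmxE mulmx_sumr mulmx_suml -sumrB; apply: eq_bigr => i _.
by rewrite diag_mx_delta_comm !mxE lift0 mulrS addrK scale1r.
Qed.

End ShiftMatrices.

Theorem theorem5p4 (S : pzRingType) (n : nat) (hn : (2 <= n)%N) (a : 'M[S]_n) :
  exists b1 c1 d1 e1 b2 c2 d2 e2 : 'M[S]_n,
    a = mxcomm b1 c1 *m mxcomm d1 e1 + mxcomm b2 c2 *m mxcomm d2 e2.
Proof.
case: n hn a => [|[|n]] // _ a.
pose N := upshift_mx S n.+1; pose T := downshift_mx S n.+1.
pose o1 : 'I_n.+2 := lift ord0 ord0.
pose E00 : 'M[S]_n.+2 := delta_mx ord0 ord0; pose E01 : 'M[S]_n.+2 := delta_mx ord0 o1.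
have E01_E00 : E01 * E00 = 0 by rewrite -mulmxE mul_delta_mx_0.
have [x1 Tx1] := lannih_commr_nilpotent_onto (N * a)
  (upshift_downshift _ _) (upshift_nilpotent _ _) (downshift_delta_max _ _).
have [x2 E01x2] := lannih_commr_nilpotent_onto (delta_mx o1 ord0 * a)
  (downshift_upshift _ _) (downshift_nilpotent _ _) E01_E00.
exists (index_diag_mx S n.+1), T, N, x1, E00, E01, T, x2.
have E00_E01_comm : E00 * E01 - E01 * E00 = E01.
  by rewrite E01_E00 subr0 -mulmxE mul_delta_mx.
rewrite /mxcomm !mulmxE index_diag_downshift_comm E00_E01_comm Tx1 E01x2.
by rewrite !mulrA downshift_upshift -mulmxE mul_delta_mx mulmxE mulrBl mul1r subrK.
Qed.
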